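(* Let $0<\epsilon<0.5$, let $n\ge3$ and $\ell\ge3$ be integers, and let $\mathrm{ENC}_\epsilon:\mathbb{Z}_2^{n-1}\to\mathbb{Z}_2^n$ be an injective map all of whose images are $\epsilon$-balanced. Define the DNA code $$\mathcal{C}_{\ell,\epsilon}=\{\tau^{-1}(\boldsymbol{c}\|\boldsymbol{y}):\ \boldsymbol{c}\in f(\ell,n),\ \boldsymbol{y}=\mathrm{ENC}_\epsilon(\boldsymbol{x}),\ \boldsymbol{x}\in\mathbb{Z}_2^{n-1}\}\subseteq\Sigma_{\rm DNA}^n.$$ Then every codeword of $\mathcal{C}_{\ell,\epsilon}$ is TC-3-dominant (hence $3$-SSA), $\ell$-run-length limited and GC-$\epsilon$-balanced, and $|\mathcal{C}_{\ell,\epsilon}|=2^{n-1}|f(\ell,n)|$.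
   Context: $\Sigma_{\rm DNA}=\{\mathrm{A},\mathrm{T},\mathrm{C},\mathrm{G}\}$ with complement $\overline{\mathrm A}=\mathrm T$, $\overline{\mathrm T}=\mathrm A$, $\overline{\mathrm C}=\mathrm G$, $\overline{\mathrm G}=\mathrm C$; the reverse-complement of $(x_1,\dots,x_n)$ is $(\overline{x_n},\dots,\overline{x_1})$. A DNA sequence is $m$-SSA if it has no two non-overlapping blocks of consecutive symbols of length $\ge m$ that are reverse-complements of each other. A DNA sequence is TC-$m$-dominant if every block of $m$ consecutive symbols contains more than $m/2$ symbols from $\{\mathrm T,\mathrm C\}$; a binary sequence is ''0''-$m$-dominant if every block of $m$ consecutive symbols contains more than $m/2$ zeros. A sequence is $\ell$-run-length limited if every maximal run of identical consecutive symbols has length at most $\ell$. $f(\ell,n)\subseteq\mathbb{Z}_2^n$ is the set of binary sequences of length $n$ that are ''0''-3-dominant and $\ell$-run-length limited. A binary $\boldsymbol{d}\in\mathbb{Z}_2^n$ is $\epsilon$-balanced if $|\mathrm{wt}(\boldsymbol{d})/n-0.5|\le\epsilon$; a DNA sequence $\boldsymbol{x}$ of length $n$ is GC-$\epsilon$-balanced if $|\mathrm{wt}_{\rm GC}(\boldsymbol{x})/n-0.5|\le\epsilon$, where $\mathrm{wt}_{\rm GC}$ counts positions equal to G or C. $\tau(\mathrm T)=00$, $\tau(\mathrm C)=01$, $\tau(\mathrm A)=10$, $\tau(\mathrm G)=11$, extended symbolwise; $\boldsymbol{x}\|\boldsymbol{y}=(x_1y_1,\dots,x_ny_n)$. *)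

From HB Require Import structures.
From mathcomp Require Import all_boot all_order all_algebra.
Set Implicit Arguments. Unset Strict Implicit. Unset Printing Implicit Defensive.
Import Order.TTheory GRing.Theory Num.Theory.

Inductive dna := DA | DT | DC | DG.

(* tau : T -> 00, C -> 01, A -> 10, G -> 11 ;  0 = false, 1 = true *)
Definition tau (x : dna) : bool * bool :=
  match x with DT => (false, false) | DC => (false, true)
             | DA => (true, false) | DG => (true, true) end.
Definition tau_inv (p : bool * bool) : dna :=
  match p with (false, false) => DT | (false, true) => DC
             | (true, false) => DA | (true, true) => DG end.
Lemma tauK : cancel tau tau_inv. Proof. by case. Qed.
HB.instance Definition _ := Finite.copy dna (can_type tauK).

Definition dna_comp (x : dna) : dna :=
  match x with DA => DT | DT => DA | DC => DG | DG => DC end.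
Definition revcomp (s : seq dna) : seq dna := rev (map dna_comp s).

Definition block {T : Type} (i k : nat) (s : seq T) : seq T := take k (drop i s).

Definition SSA (m : nat) (s : seq dna) : Prop :=
  ~ exists i j k : nat,
      [/\ m <= k, i + k <= size s, j + k <= size s,
          (i + k <= j) || (j + k <= i)
        & block j k s = revcomp (block i k s)].

Definition dominant {T : Type} (P : pred T) (m : nat) (s : seq T) : bool :=
  [forall i : 'I_(size s).+1, (i + m <= size s) ==> (m < 2 * count P (block i m s))].

Definition isTC (x : dna) : bool := (x == DT) || (x == DC).
Definition isGC (x : dna) : bool := (x == DG) || (x == DC).

Definition TC_dominant (m : nat) (s : seq dna) : bool := dominant isTC m s.
Definition zero_dominant (m : nat) (s : seq bool) : bool := dominant (fun b => ~~ b) m s.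

Definition rll {T : eqType} (l : nat) (s : seq T) : bool :=
  [forall i : 'I_(size s).+1, forall k : 'I_(size s).+1,
     (i + k <= size s) && constant (block i k s) ==> (k <= l)].

Definition f_set (l n : nat) : {set n.-tuple bool} :=
  [set c : n.-tuple bool | zero_dominant 3 c && rll l c].

Local Open Scope ring_scope.

Definition wt (d : seq bool) : nat := count id d.
Definition wtGC (x : seq dna) : nat := count isGC x.

Definition balanced {R : realFieldType} (eps : R) (d : seq bool) : Prop :=
  `| (wt d)%:R / (size d)%:R - 2^-1 | <= eps.
Definition GC_balanced {R : realFieldType} (eps : R) (x : seq dna) : Prop :=
  `| (wtGC x)%:R / (size x)%:R - 2^-1 | <= eps.

Local Close Scope ring_scope.

Definition interleave {n : nat} (c y : n.-tuple bool) : n.-tuple dna :=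
  [tuple tau_inv (tnth c i, tnth y i) | i < n].

Definition code (l n : nat) (ENC : (n - 1).-tuple bool -> n.-tuple bool)
  : {set n.-tuple dna} :=
  [set interleave c (ENC x) | c in f_set l n, x in [set: (n - 1).-tuple bool]].

From HB Require Import structures.
From mathcomp Require Import all_boot all_order all_algebra.
From mathcomp Require Import zify.
Import Order.TTheory GRing.Theory Num.Theory.

(* Read a DNA word w through tau: its first bit-row
   c = map (fst \o tau) w records whether a symbol lies outside {T, C}, and
   its second bit-row y = map (snd \o tau) w records whether it lies in
   {G, C}.  All three local constraints on w are therefore constraints on
   one of the two rows:
   - TC-m-dominance of w is "0"-m-dominance of c, and since every run of w
     is mapped to a run of c, c being l-RLL forces w to be l-RLL;
   - the GC-weight of w is the Hamming weight of y.
   Moreover TC-m-dominance implies m-SSA for every m: the first m symbols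
   of a block and the last m symbols of its reverse-complement cannot both
   contain a majority of T/C symbols, since complementation swaps {T, C}
   with {A, G}.  Finally the interleaving map (c, y) |-> tau^-1(c || y) is
   injective, because both rows can be read back; together with the
   injectivity of ENC this makes the code the injective image of
   f(l, n) x Z_2^(n-1), whence its cardinality. *)

Lemma dominantP (T : Type) (P : pred T) m (s : seq T) :
  dominant P m s <-> forall i, i + m <= size s -> m < 2 * count P (block i m s).
Proof.
split=> [/forallP dom i lim | dom]; last first.
  by apply/forallP => i; apply/implyP; apply: dom.
have ilt : i < (size s).+1 by rewrite ltnS (leq_trans (leq_addr m i)).
exact: (implyP (dom (Ordinal ilt))).
Qed.

Lemma rllP (T : eqType) l (s : seq T) :
  rll l s <-> forall i k, i + k <= size s -> constant (block i k s) -> k <= l.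
Proof.
split=> [/forallP runs i k lik cst | runs]; last first.
  by apply/forallP => i; apply/forallP => k; apply/implyP => /andP []; apply: runs.
have ilt : i < (size s).+1 by rewrite ltnS (leq_trans (leq_addr k i)).
have klt : k < (size s).+1 by rewrite ltnS (leq_trans (leq_addl i k)).
by apply: (implyP (forallP (runs (Ordinal ilt)) (Ordinal klt))); rewrite /= lik cst.
Qed.

Lemma block_map (T U : Type) (f : T -> U) i k (s : seq T) :
  block i k (map f s) = map f (block i k s).
Proof. by rewrite /block -map_drop -map_take. Qed.

Lemma dominant_map {T U : Type} (f : T -> U) (P : pred U) (Q : pred T) m (s : seq T) :
  P \o f =1 Q -> dominant P m (map f s) <-> dominant Q m s.
Proof.
move=> PQ; rewrite !dominantP size_map.
by split=> dom i /dom; rewrite block_map count_map (eq_count PQ).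
Qed.

(* A symbol-wise image of a constant block is constant, so run-length limits
   pull back along any map. *)
Lemma rll_map {T U : eqType} (f : T -> U) l (s : seq T) :
  rll l (map f s) -> rll l s.
Proof.
rewrite !rllP size_map => runs i k lik cst; apply: runs lik _.
rewrite block_map; case: (block i k s) cst => [|x t] //= cst.
by rewrite all_map; apply: sub_all cst => z /= /eqP ->.
Qed.

(* Reverse-complementation exchanges T/C symbols with A/G symbols. *)
Lemma count_TC_revcomp (s : seq dna) :
  count isTC (revcomp s) = size s - count isTC s.
Proof.
rewrite /revcomp count_rev count_map -(count_predC isTC s) addKn.
by apply: eq_count; case.
Qed.

Lemma block_suffix (T : Type) j k m (s : seq T) :
  m <= k -> block (j + (k - m)) m s = drop (k - m) (block j k s).
Proof. by move=> mk; rewrite /block [j + _]addnC -drop_drop take_drop subnKC. Qed.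

Lemma drop_revcomp (t : seq dna) m :
  m <= size t -> drop (size t - m) (revcomp t) = revcomp (take m t).
Proof. by move=> mt; rewrite /revcomp drop_rev size_map subKn // map_take. Qed.

(* TC-m-dominance forbids any pair of non-overlapping reverse-complementary
   blocks of length >= m: compare the prefix of length m of one block with
   the suffix of length m of the other. *)
Lemma TC_dominant_SSA m (w : seq dna) : TC_dominant m w -> SSA m w.
Proof.
move=> /dominantP dom [i [j [k [mk ik jk _ rc]]]].
have szk : size (block i k w) = k.
  by rewrite /block size_takel // size_drop leq_subRL // (leq_trans _ ik) ?leq_addr.
set t := take m (block i k w).
have szt : size t = m by rewrite size_takel ?szk.
have head : block i m w = t by rewrite /t /block take_takel.
have tail : block (j + (k - m)) m w = revcomp t.
  by rewrite block_suffix // rc -{1}szk drop_revcomp ?szk.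
have := dom i (leq_trans (leq_add (leqnn i) mk) ik).
have := dom (j + (k - m)); rewrite -addnA subnK // => /(_ jk).
rewrite head tail count_TC_revcomp szt.
have := count_size isTC t; rewrite szt; lia.
Qed.

Lemma interleave_rows {n} (c y : n.-tuple bool) :
  map (fun d => (tau d).1) (interleave c y) = c /\
  map (fun d => (tau d).2) (interleave c y) = y.
Proof.
split; [rewrite -[RHS](map_tnth_enum c) | rewrite -[RHS](map_tnth_enum y)];
  by rewrite /= -map_comp; apply: eq_map => i /=; case: (tnth c i); case: (tnth y i).
Qed.

Lemma interleave_inj {n} (c y c' y' : n.-tuple bool) :
  interleave c y = interleave c' y' -> c = c' /\ y = y'.
Proof.
move=> /(congr1 val) eq_cy; have [c1 y1] := interleave_rows c y.
have [c2 y2] := interleave_rows c' y'.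
by split; apply: val_inj => /=; [rewrite -c1 -c2 | rewrite -y1 -y2]; rewrite eq_cy.
Qed.

Lemma interleave_constraints (R : realFieldType) (eps : R) n l (c y : n.-tuple bool) :
  c \in f_set l n -> balanced eps y ->
  [/\ TC_dominant 3 (interleave c y), SSA 3 (interleave c y),
      rll l (interleave c y) & GC_balanced eps (interleave c y)].
Proof.
rewrite inE => /andP [c_dom c_rll] y_bal; have [c_row y_row] := interleave_rows c y.
have w_dom : TC_dominant 3 (interleave c y).
  by apply/(dominant_map (fun d => (tau d).1) (fun b => ~~ b)); [case | rewrite c_row].
split=> //; first exact: TC_dominant_SSA.
  by apply: (rll_map (fun d => (tau d).1)); rewrite c_row.
move: y_bal; rewrite /balanced /GC_balanced /wt /wtGC -y_row count_map size_map.
by rewrite (@eq_count _ _ isGC) //; case.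
Qed.

(* The code is the injective image of f(l, n) x Z_2^(n-1). *)
Lemma card_code n l (ENC : (n - 1).-tuple bool -> n.-tuple bool) :
  injective ENC -> #|code l ENC| = 2 ^ (n - 1) * #|f_set l n|.
Proof.
move=> injE.
have -> : code l ENC =
    [set interleave p.1 (ENC p.2) | p in setX (f_set l n) [set: (n - 1).-tuple bool]].
  apply/setP => w; apply/imset2P/imsetP.
    by case=> c x cf xT ->; exists (c, x) => //; rewrite inE cf xT.
  by case=> [[c x]]; rewrite inE => /andP [cf xT] ->; exists c x.
rewrite card_in_imset; last by move=> [c x] [c' x'] _ _ /= /interleave_inj [-> /injE ->].
by rewrite cardsX cardsT card_tuple card_bool mulnC.
Qed.

Theorem theorem1 (R : realFieldType) (eps : R) (n l : nat)
  (ENC : (n - 1).-tuple bool -> n.-tuple bool) :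
  (0 < eps)%R -> (eps < 2^-1)%R -> 3 <= n -> 3 <= l ->
  injective ENC -> (forall x, balanced eps (ENC x)) ->
  (forall w, w \in code l ENC ->
     [/\ TC_dominant 3 w, SSA 3 w, rll l w & GC_balanced eps w]) /\
  #|code l ENC| = 2 ^ (n - 1) * #|f_set l n|.
Proof.
move=> _ _ _ _ injE balE; split; last exact: card_code.
by move=> w /imset2P [c x cf _ ->]; apply: interleave_constraints.
Qed.
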